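(* Let $d\in\mathbb{Z}^+$, let $A,C_0\subseteq\mathbb{R}^2$ and $B_0\subseteq A\setminus C_0$. Let $B\subseteq A$ with $|B|=\binom{d+2}{2}-3$ satisfy: (i) $\dim\psi_d(B)=\binom{d+2}{2}-4$; (ii) $B\supseteq B_0$; (iii) $B\cap C_0=B\setminus B_0$; (iv) for all $(e,D)\in I(B,C_0)$, $\max\{\tau_e(B,D),\mu_e(B,D)\}<\binom{d+2}{2}$; (v) for all $(e,D)\in(\{1,\dots,d-1\}\times\mathcal{P}(B))\setminus I(B,C_0)$ with $\alpha_e(D)\ge0$, we have $\gamma_e(B,D)<\binom{d+2}{2}-\binom{d-e+2}{2}$ and $\beta_e(B,D)<0$. Then $B\in\mathcal{N}_d(A,B_0,C_0)$.
   Context: For $k\in\mathbb{Z}^+$, a curve of degree $k$ is the zero set in $\mathbb{R}^2$ of a polynomial in $\mathbb{R}[x,y]$ of degree exactly $k$; $\mathcal{C}_k$ is the family of such curves. For $k\in\mathbb{Z}^+$ let $I_k=\{(i,j)\in\mathbb{Z}_{\ge 0}^2: 1\le i+j\le k\}$ and $\psi_k:\mathbb{R}^2\to\mathbb{R}^{\binom{k+2}{2}-1}$, $\psi_k(a_1,a_2)=(a_1^ia_2^j)_{(i,j)\in I_k}$. $\mathrm{Fl}(S)$ is the affine hull of $S$ ($\mathrm{Fl}(\emptyset)=\emptyset$); $\dim S:=\dim\mathrm{Fl}(S)$, $\dim\emptyset=-1$. $\mathcal{P}(X)$ is the power set. With $d$ fixed, for $e\in\{1,\dots,d-1\}$, finite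 $B\subseteq\mathbb{R}^2$ and $D\subseteq B$: $V_e(D):=\mathrm{Fl}(\psi_e(D))$; $V_d(B):=\mathrm{Fl}(\psi_d(B))$; $W_e(B,D):=\mathrm{Fl}\big(\psi_{d-e}(B\setminus\psi_e^{-1}(V_e(D)))\big)$; $\alpha_e(D):=\binom{e+2}{2}-2-\dim V_e(D)$; $\beta_e(B,D):=\binom{d-e+2}{2}-3-\dim W_e(B,D)$; $\gamma_e(B,D):=|V_e(D)\cap\psi_e(B)|$; $\mu_e(B,D):=0$ if $\alpha_e(D)<0$, else $\mu_e(B,D):=\alpha_e(D)+\gamma_e(B,D)+\binom{d-e+2}{2}$; $\tau_e(B,D):=0$ if $\min\{\alpha_e(D),\beta_e(B,D)\}<0$ or $\gamma_e(B,D)>\binom{d+2}{2}-\binom{d-e+2}{2}-1$; $:=\alpha_e(D)+\beta_e(B,D)+|B|+2$ if $\min\{\alpha_e(D),\beta_e(B,D)\}\ge0$ and $\gamma_e(B,D)=\binom{d+2}{2}-\binom{d-e+2}{2}-1$; $:=\alpha_e(D)+\beta_e(B,D)+|B|+3$ if $\min\{\alpha_e(D),\beta_e(B,D)\}\ge0$ and $\gamma_e(B,D)<\binom{d+2}{2}-\binom{d-e+2}{2}-1$; $U_e(B,D):=\psi_d^{-1}(V_d(B))$ if $\alpha_e(D)<0$; $:=\psi_d^{-1}(V_d(B))\cup\psi_e^{-1}(V_e(D))$ if $\beta_e(B,D)<0\le\alpha_e(D)$; $:=\psi_d^{-1}(V_d(B))\cup\psi_e^{-1}(V_e(D))\cup\psi_{d-e}^{-1}(W_e(B,D))$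 if $\alpha_e(D),\beta_e(B,D)\ge0$; $I(B,C):=\{(f,E)\in\{1,\dots,d-1\}\times\mathcal{P}(B): C\not\subseteq U_f(B,E)\}$. $\mathcal{N}_d(A)$ is the family of $B\subseteq A$ with $|B|=\binom{d+2}{2}-3$ such that: (a) $\dim\psi_d(B)=\binom{d+2}{2}-4$; (b) for all $e\in\{1,\dots,d-1\}$ and $C\in\mathcal{C}_e$, $|B\cap C|<\binom{d+2}{2}-\binom{d-e+2}{2}$; (c) for all $e\in\{1,\dots,d-1\}$ and $C\in\mathcal{C}_e$ with $|B\cap C|=\binom{d+2}{2}-\binom{d-e+2}{2}-1$, $\dim\psi_{d-e}(B\setminus C)=\binom{d-e+2}{2}-3$; (d) for all $e\in\{1,\dots,d-1\}$ and $C\in\mathcal{C}_e$ with $|B\cap C|<\binom{d+2}{2}-\binom{d-e+2}{2}-1$, $\dim\psi_{d-e}(B\setminus C)>\binom{d-e+2}{2}-3$. Finally $\mathcal{N}_d(A,B_0,C_0):=\{E\in\mathcal{N}_d(A): B_0\subseteq E\text{ and }E\cap C_0=E\setminus B_0\}$. *)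

From HB Require Import structures.
From mathcomp Require Import all_boot all_order all_algebra.
From mathcomp Require Import finmap.
From mathcomp Require Import mpoly.
From mathcomp Require Import reals.
Set Implicit Arguments.
Unset Strict Implicit.
Unset Printing Implicit Defensive.
Import Order.TTheory GRing.Theory Num.Theory.
Local Open Scope ring_scope.


Section Defs.
Variable R : realType.

Definition pt := (R * R)%type.

Definition nb (k : nat) : int := ('C(k.+2, 2))%:Z.

Definition Ik (k : nat) := {p : 'I_k.+1 * 'I_k.+1 | (1 <= p.1 + p.2 <= k)%N}.

(* R^{I_k} ~ R^{binom(k+2,2)-1} *)
Definition Vec (k : nat) := {ffun Ik k -> R^o}.

Definition psi (k : nat) (a : pt) : Vec k :=
  [ffun p : Ik k => (a.1 ^+ (val p).1 * a.2 ^+ (val p).2 : R^o)].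

Definition in_Fl (k : nat) (S : seq (Vec k)) (v : Vec k) : bool :=
  if S is s0 :: _ then (v - s0) \in <<[seq s - s0 | s <- S]>>%VS else false.

Definition dimFl (k : nat) (S : seq (Vec k)) : int :=
  if S is s0 :: _ then (\dim <<[seq s - s0 | s <- S]>>%VS)%:Z else (-1)%R.

Definition psis (k : nat) (X : {fset pt}) : seq (Vec k) :=
  [seq psi k x | x <- (X : seq pt)].

Variable d : nat.

Definition inV (e : nat) (D : {fset pt}) (p : pt) : bool :=
  in_Fl (psis e D) (psi e p).
Definition inVd (B : {fset pt}) (p : pt) : bool :=
  in_Fl (psis d B) (psi d p).
Definition Bout (e : nat) (B D : {fset pt}) : {fset pt} :=
  [fset b in B | ~~ inV e D b]%fset.
Definition inW (e : nat) (B D : {fset pt}) (p : pt) : bool :=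
  in_Fl (psis (d - e) (Bout e B D)) (psi (d - e) p).

Definition alpha (e : nat) (D : {fset pt}) : int :=
  nb e - 2 - dimFl (psis e D).
Definition beta (e : nat) (B D : {fset pt}) : int :=
  nb (d - e) - 3 - dimFl (psis (d - e) (Bout e B D)).
Definition gamma (e : nat) (B D : {fset pt}) : int :=
  (#|` [fset v in [fset psi e b | b in B]%fset | in_Fl (psis e D) v]%fset |)%:Z.

Definition mu (e : nat) (B D : {fset pt}) : int :=
  if alpha e D < 0 then 0 else alpha e D + gamma e B D + nb (d - e).

Definition tau (e : nat) (B D : {fset pt}) : int :=
  if (Num.min (alpha e D) (beta e B D) < 0)
     || (gamma e B D > nb d - nb (d - e) - 1) then 0
  else if gamma e B D == nb d - nb (d - e) - 1 then
    alpha e D + beta e B D + (#|` B|)%:Z + 2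
  else alpha e D + beta e B D + (#|` B|)%:Z + 3.

Definition inU (e : nat) (B D : {fset pt}) (p : pt) : bool :=
  if alpha e D < 0 then inVd B p
  else if beta e B D < 0 then inVd B p || inV e D p
  else [|| inVd B p, inV e D p | inW e B D p].

Definition inI (B : {fset pt}) (C : pt -> Prop) (f : nat) (E : {fset pt}) : Prop :=
  [/\ (1 <= f <= d - 1)%N, (E `<=` B)%fset & exists c, C c /\ ~~ inU f B E c].

Definition ev2 (p : pt) : 'I_2 -> R := fun i => if val i == 0%N then p.1 else p.2.

Definition capZ (X : {fset pt}) (P : {mpoly R[2]}) : {fset pt} :=
  [fset x in X | P.@[ev2 x] == 0]%fset.
Definition diffZ (X : {fset pt}) (P : {mpoly R[2]}) : {fset pt} :=
  [fset x in X | P.@[ev2 x] != 0]%fset.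

(* curves of degree exactly e: zero sets of P with total degree e,
   i.e. msize P = e.+1 *)
Definition Nd (A : pt -> Prop) (B : {fset pt}) : Prop :=
  [/\ (forall b, b \in B -> A b),
      (#|` B|)%:Z = nb d - 3,
      dimFl (psis d B) = nb d - 4 &
      forall (e : nat) (P : {mpoly R[2]}), (1 <= e <= d - 1)%N -> msize P = e.+1 ->
        [/\ (#|` capZ B P|)%:Z < nb d - nb (d - e),
            (#|` capZ B P|)%:Z = nb d - nb (d - e) - 1 ->
              dimFl (psis (d - e) (diffZ B P)) = nb (d - e) - 3 &
            (#|` capZ B P|)%:Z < nb d - nb (d - e) - 1 ->
              dimFl (psis (d - e) (diffZ B P)) > nb (d - e) - 3]].

Definition Nd3 (A : pt -> Prop) (B0 C0 : pt -> Prop) (E : {fset pt}) : Prop :=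
  [/\ Nd A E, (forall x, B0 x -> x \in E) &
      forall x, x \in E -> (C0 x <-> ~ B0 x)].

End Defs.

(* Fix a curve C = Z(P) of degree e < d and put D = B ∩ C.  Evaluation of P is
   an affine function of the Veronese coordinates psi_e, and a nonconstant one
   since deg P > 0.  Hence psi_e(D) lies in an affine hyperplane, so
   alpha_e(D) >= 0, and psi_e^{-1}(V_e(D)) meets B exactly in D, so that
   gamma_e(B,D) = |B ∩ C| and B \ psi_e^{-1}(V_e(D)) = B \ C.  With |B| fixed,
   (iv) or (v), according as (e,D) lies in I(B,C_0) or not, bounds |B ∩ C| by
   N - M - 1 (N, M the binomials for d and d - e) and forces beta_e(B,D) < 0
   except when |B ∩ C| = N - M - 1 and beta_e(B,D) = 0.  As
   dim psi_{d-e}(B \ C) <= |B \ C| - 1 = M - 3 in that extremal case, the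
   curve conditions (b)-(d) of N_d follow. *)

From HB Require Import structures.
From mathcomp Require Import all_boot all_order all_algebra.
From mathcomp Require Import finmap.
From mathcomp Require Import mpoly.
From mathcomp Require Import reals.
From mathcomp Require Import zify.
From Stdlib Require Import Classical.
Set Implicit Arguments.
Unset Strict Implicit.
Unset Printing Implicit Defensive.
Import Order.TTheory GRing.Theory Num.Theory.
Local Open Scope ring_scope.

Lemma sum_ord_leq n k : (\sum_(j < n) (j <= k : nat) = minn n k.+1)%N.
Proof.
elim: n => [|n IHn]; first by rewrite big_ord0.
by rewrite big_ord_recr /= IHn; case: (leqP n k) => ?; lia.
Qed.

Lemma card_triangle e :
  #|[pred p : 'I_e.+1 * 'I_e.+1 | (p.1 + p.2 <= e)%N]| = 'C(e.+2, 2).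
Proof.
rewrite -sum1_card big_mkcond /=.
rewrite (eq_bigr (fun p : 'I_e.+1 * 'I_e.+1 => (p.2 <= e - p.1 : nat)));
  last by move=> [i j] _; rewrite inE /=; have := ltn_ord i; case: ifP; lia.
rewrite -(pair_bigA _ (fun i j : 'I_e.+1 => (j <= e - i : nat))) /=.
rewrite (eq_bigr (fun i : 'I_e.+1 => (e - i).+1));
  last by move=> i _; rewrite sum_ord_leq; have := ltn_ord i; lia.
rewrite -(big_mkord xpredT (fun i => (e - i).+1)) big_nat_rev /=.
rewrite (eq_big_nat _ _ (F2 := S)); last by move=> i; lia.
by rewrite -triangular_sum [RHS]big_nat_recl.
Qed.

Lemma card_Ik e : #|{: Ik e}| = ('C(e.+2, 2)).-1.
Proof.
rewrite /Ik card_sig -card_triangle [in RHS](cardD1 (ord0, ord0)) inE /=.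
apply: eq_card => -[i j]; rewrite !inE /= xpair_eqE.
by case: (i + j <= e)%N; rewrite ?andbT ?andbF // -!val_eqE /=; lia.
Qed.


Section AffineHull.
Variables (R : realType) (k : nat).
Implicit Types (S : seq (Vec R k)) (v : Vec R k).

Lemma in_Fl_mem S v : v \in S -> in_Fl S v.
Proof. by case: S => // s0 S vS; apply/memv_span; exact: (map_f (fun s => s - s0)). Qed.

Lemma dimFl_le_size S : dimFl S <= (size S)%:Z - 1.
Proof.
case: S => [|s0 S] //=; rewrite subrr.
have span0 : (<<(0%R : Vec R k) :: [seq s - s0 | s <- S]>> <= <<[seq s - s0 | s <- S]>>)%VS.
  by apply/span_subvP => u; rewrite inE => /predU1P [->|/memv_span //]; rewrite mem0v.
rewrite intS [1 + _]addrC addrK lez_nat.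
by rewrite (leq_trans (dimvS span0)) // (leq_trans (dim_span _)) ?size_map.
Qed.

Section LevelSet.
Variables (f : {linear Vec R k -> R^o}) (c : R) (S : seq (Vec R k)).
Hypothesis f_S : {in S, forall s, f s = c}.

Lemma span_Fl_sub_lker s0 : s0 \in S ->
  (<<[seq s - s0 | s <- S]>> <= lker (linfun f))%VS.
Proof.
move=> s0S; apply/span_subvP => _ /mapP [s sS ->].
by rewrite memv_ker lfunE raddfB /= !f_S ?subrr.
Qed.

Lemma in_Fl_level v : in_Fl S v -> f v = c.
Proof.
case defS: S => [|s0 S'] //; rewrite /in_Fl -defS.
have s0S : s0 \in S by rewrite defS mem_head.
move=> /(subvP (span_Fl_sub_lker s0S)).
by rewrite memv_ker lfunE raddfB /= (f_S s0S) subr_eq0 => /eqP.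
Qed.

Lemma dimFl_level_lt : (exists u, f u != 0) -> dimFl S < (#|{: Ik k}|)%:Z.
Proof.
case=> u fu; case defS: S => [|s0 S'] //; rewrite /dimFl -defS.
have s0S : s0 \in S by rewrite defS mem_head.
have ker_proper : lker (linfun f) != fullv.
  by apply: contraNneq fu => kerT; rewrite -lfunE -memv_ker kerT memvf.
have dimT : \dim (fullv : {vspace Vec R k}) = #|{: Ik k}| by rewrite dimvf /dim /= muln1.
have dim_ker : (\dim (lker (linfun f)) < #|{: Ik k}|)%N.
  by rewrite -dimT (ltn_leqif (dimv_leqif_eq (subvf _))) ker_proper.
by rewrite ltz_nat (leq_ltn_trans (dimvS (span_Fl_sub_lker s0S))).
Qed.

End LevelSet.
End AffineHull.

Section VeroneseHyperplane.
Variables (R : realType) (e : nat).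
Hypothesis e_gt0 : (0 < e)%N.

Lemma mdeg2 (m : 'X_{1..2}) : mdeg m = (m ord0 + m ord_max)%N.
Proof.
by rewrite mdegE !big_ord_recl big_ord0 addn0; congr (_ + m _)%N; apply: val_inj.
Qed.

Definition ik10 : Ik e := exist _ (@Ordinal e.+1 1 e_gt0, ord0) e_gt0.
Definition ik01 : Ik e := exist _ (ord0, @Ordinal e.+1 1 e_gt0) e_gt0.

Lemma psi_inj : injective (@psi R e).
Proof.
move=> [x1 x2] [y1 y2] /ffunP psi_xy; have := psi_xy ik10; have := psi_xy ik01.
by rewrite !ffunE /= !expr0 !expr1 !mulr1 !mul1r => -> ->.
Qed.

(* [ik10] is a junk value, taken by the monomials of degree [0] or [> e]. *)
Definition mon_index (m : 'X_{1..2}) : Ik e :=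
  insubd ik10 (inord (m ord0), inord (m ord_max)).

Lemma mon_index_val m : (0 < mdeg m <= e)%N ->
  val (val (mon_index m)).1 = m ord0 /\ val (val (mon_index m)).2 = m ord_max.
Proof.
rewrite mdeg2 => m_deg; have m0_le : (m ord0 <= e)%N by lia.
have m1_le : (m ord_max <= e)%N by lia.
by rewrite /mon_index insubdK /= ?inordK //; rewrite unfold_in /= !inordK.
Qed.

Lemma mon_index_inj : {in [pred m | 0 < mdeg m <= e]%N &, injective mon_index}.
Proof.
move=> m m' m_deg m'_deg eq_index.
have [m0 m1] := mon_index_val m_deg; have [m'0 m'1] := mon_index_val m'_deg.
apply/mnmP => i; have [->|->] : i = ord0 \/ i = ord_max.
  by case: i => -[|[|//]] ?; [left|right]; apply: val_inj.
- by rewrite -m0 -m'0 eq_index.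
- by rewrite -m1 -m'1 eq_index.
Qed.

Variable P : {mpoly R[2]}.
Hypothesis msizeP : msize P = e.+1.

Definition lin_part (v : Vec R e) : R^o :=
  \sum_(m <- msupp P | m != 0%MM) P@_m * v (mon_index m).

Fact lin_part_is_linear : linear_for *:%R lin_part.
Proof.
move=> a u v; rewrite /lin_part scaler_sumr -big_split /=.
by apply: eq_bigr => m _; rewrite !ffunE mulrDr; congr (_ + _); exact: mulrCA.
Qed.

HB.instance Definition _ :=
  GRing.isLinear.Build R (Vec R e) R^o *:%R lin_part lin_part_is_linear.

Lemma msupp_deg_nonconst m : m \in msupp P -> m != 0%MM -> (0 < mdeg m <= e)%N.
Proof.
move=> /msize_mdeg_lt; rewrite msizeP ltnS -mdeg_eq0 => -> m_deg.
by rewrite lt0n m_deg.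
Qed.

Lemma meval_psi x : P.@[ev2 x] = P@_0 + lin_part (psi e x).
Proof.
have -> : P@_0 = \sum_(m <- msupp P) P@_m * (m == 0%MM)%:R.
  by rewrite {1}[P]mpolyE raddf_sum; apply: eq_bigr => m _; rewrite /= mcoeffZ mcoeffX.
rewrite mevalE /lin_part [in X in _ + X]big_mkcond -big_split /=.
apply: eq_big_seq => m mP.
have [->|m0] := eqVneq m 0%MM.
  by rewrite big1 => [|i _]; rewrite ?mnm0E ?expr0 ?mulr1 ?addr0.
have [a b] := mon_index_val (msupp_deg_nonconst mP m0).
rewrite mulr0 add0r ffunE !big_ord_recl big_ord0 mulr1 /ev2 /= a b.
by congr (_ * (_ * x.2 ^+ m _)); apply: val_inj.
Qed.

Lemma lin_part_neq0 : exists u, lin_part u != 0.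
Proof.
have P0 : P != 0 by rewrite -msize_poly_eq0 msizeP.
have mP := mlead_supp P0.
have m0 : mlead P != 0%MM.
  by rewrite -mdeg_eq0 -eqSS mlead_deg // msizeP eqSS -lt0n.
exists [ffun q => ((q == mon_index (mlead P))%:R : R^o)].
rewrite /lin_part big_mkcond (bigD1_seq (mlead P)) ?msupp_uniq //= m0 ffunE eqxx mulr1.
rewrite big1_seq ?addr0 ?mleadc_eq0 // => m /andP [m_neq mP'].
case: ifP => // m0'; rewrite ffunE.
have /negbTE -> : mon_index m != mon_index (mlead P).
  apply: contra m_neq => /eqP eq_idx.
  by apply/eqP/mon_index_inj; rewrite ?inE ?msupp_deg_nonconst.
by rewrite mulr0.
Qed.

Lemma lin_part_psi_root (s : seq (pt R)) : {in s, forall y, P.@[ev2 y] = 0} ->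
  {in [seq psi e y | y <- s], forall v, lin_part v = - P@_0}.
Proof.
by move=> s_root _ /mapP [y ys ->]; apply/eqP; rewrite -addr_eq0 addrC -meval_psi s_root.
Qed.

Lemma in_Fl_psi_root (s : seq (pt R)) b : {in s, forall y, P.@[ev2 y] = 0} ->
  in_Fl [seq psi e y | y <- s] (psi e b) -> P.@[ev2 b] = 0.
Proof.
move=> s_root /(in_Fl_level (lin_part_psi_root s_root)) lin_b.
by rewrite meval_psi lin_b subrr.
Qed.

Lemma dimFl_psi_root (s : seq (pt R)) : {in s, forall y, P.@[ev2 y] = 0} ->
  dimFl [seq psi e y | y <- s] <= nb e - 2.
Proof.
move=> s_root; have := dimFl_level_lt (lin_part_psi_root s_root) lin_part_neq0.
by rewrite card_Ik /nb; have := bin_gt0 e.+2 2; lia.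
Qed.

End VeroneseHyperplane.

Section CurveSlice.
Variables (R : realType) (e : nat) (P : {mpoly R[2]}) (B : {fset pt R}).

Lemma capZ_sub : (capZ B P `<=` B)%fset.
Proof. by apply/fsubsetP => b; rewrite inE => /andP []. Qed.

Lemma card_diffZ : (#|` diffZ B P|)%:Z = (#|` B|)%:Z - (#|` capZ B P|)%:Z.
Proof.
have -> : diffZ B P = (B `\` capZ B P)%fset.
  by apply/fsetP => b; rewrite !inE; case: (b \in B); rewrite ?andbF ?andbT.
by rewrite cardfsDS ?capZ_sub // subzn // fsubset_leq_card // capZ_sub.
Qed.

Hypotheses (e_gt0 : (0 < e)%N) (msizeP : msize P = e.+1).

Let capZ_root : {in capZ B P, forall y, P.@[ev2 y] = 0}.
Proof. by move=> y; rewrite inE => /andP [_ /eqP]. Qed.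

Lemma inV_capZ b : b \in B -> inV e (capZ B P) b = (P.@[ev2 b] == 0).
Proof.
move=> bB; apply/idP/eqP => [|Pb]; first exact: in_Fl_psi_root capZ_root.
by apply: in_Fl_mem; apply/mapP; exists b; rewrite // !inE bB Pb eqxx.
Qed.

Lemma Bout_capZ : Bout e B (capZ B P) = diffZ B P.
Proof.
apply/fsetP => b; rewrite !inE.
by apply: andb_id2l => bB; rewrite inV_capZ.
Qed.

Lemma gamma_capZ : gamma e B (capZ B P) = (#|` capZ B P|)%:Z.
Proof.
rewrite /gamma; congr Posz.
have -> : [fset v in [fset psi e b | b in B] | in_Fl (psis e (capZ B P)) v]%fset =
          [fset psi e b | b in capZ B P]%fset.
  apply/fsetP => v; rewrite !inE.
  apply/andP/imfsetP => [[/imfsetP [b /= bB ->] Fl_b]|[b /= bC ->]].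
    have Pb : P.@[ev2 b] == 0 by rewrite -(inV_capZ bB).
    by exists b; rewrite // !inE bB Pb.
  have bB := fsubsetP capZ_sub b bC.
  split; first by apply/imfsetP; exists b.
  by move: bC; rewrite -[in_Fl _ _]/(inV e _ b) inV_capZ // !inE => /andP [].
by rewrite card_imfset //; exact: psi_inj.
Qed.

Lemma alpha_capZ_ge0 : 0 <= alpha e (capZ B P).
Proof. by rewrite /alpha subr_ge0; apply: dimFl_psi_root capZ_root. Qed.

End CurveSlice.

Definition slice_bounds (R : realType) (d e : nat) (B D : {fset pt R}) : Prop :=
  gamma e B D < nb d - nb (d - e) /\
  (0 <= beta d e B D -> gamma e B D = nb d - nb (d - e) - 1 /\ beta d e B D = 0).

Lemma slice_bounds_tau_mu (R : realType) (d e : nat) (B D : {fset pt R}) :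
  (#|` B|)%:Z = nb d - 3 -> 0 <= alpha e D ->
  Num.max (tau d e B D) (mu d e B D) < nb d -> slice_bounds d e B D.
Proof.
move=> cardB alpha_ge0; have alpha_lt0 : (alpha e D < 0) = false by rewrite ltNge alpha_ge0.
rewrite gt_max /mu alpha_lt0 => /andP [tau_lt mu_lt]; split=> [|beta_ge0]; first lia.
have beta_lt0 : (beta d e B D < 0) = false by rewrite ltNge beta_ge0.
have gamma_le : gamma e B D <= nb d - nb (d - e) - 1 by lia.
move: tau_lt; rewrite /tau gt_min alpha_lt0 beta_lt0 (ltNge _ (gamma e B D)) gamma_le.
by rewrite cardB /=; case: eqP; lia.
Qed.

Theorem lemma23 (R : realType) (d : nat) (A C0 B0 : pt R -> Prop) (B : {fset pt R}) :
  (1 <= d)%N ->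
  (forall x, B0 x -> A x /\ ~ C0 x) ->
  (forall b, b \in B -> A b) ->
  (#|` B|)%:Z = nb d - 3 ->
  dimFl (psis d B) = nb d - 4 ->
  (forall x, B0 x -> x \in B) ->
  (forall x, x \in B -> (C0 x <-> ~ B0 x)) ->
  (forall (e : nat) (D : {fset pt R}), inI d B C0 e D ->
     Num.max (tau d e B D) (mu d e B D) < nb d) ->
  (forall (e : nat) (D : {fset pt R}), (1 <= e <= d - 1)%N -> (D `<=` B)%fset ->
     ~ inI d B C0 e D -> 0 <= alpha e D ->
     gamma e B D < nb d - nb (d - e) /\ beta d e B D < 0) ->
  Nd3 d A B0 C0 B.
Proof.
move=> _ _ A_B cardB dimB B0_B C0_B I_bound notI_bound.
split=> //; split=> // e P e_range msizeP.
have e_gt0 : (0 < e)%N by case/andP: e_range.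
have alpha_ge0 := alpha_capZ_ge0 B e_gt0 msizeP.
have [gamma_lt beta_ge0] : slice_bounds d e B (capZ B P).
  have [I_eD|notI_eD] := classic (inI d B C0 e (capZ B P)).
    exact: slice_bounds_tau_mu cardB alpha_ge0 (I_bound _ _ I_eD).
  have [gamma_lt beta_lt0] := notI_bound e _ e_range (capZ_sub P B) notI_eD alpha_ge0.
  by split=> // ?; lia.
have := dimFl_le_size (psis (d - e) (diffZ B P)); rewrite size_map card_diffZ.
rewrite /beta Bout_capZ // gamma_capZ // in gamma_lt beta_ge0.
split; lia.
Qed.
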